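(* In $M_3(K[T_3])$ the following equalities hold, where $f_{ij}=\frac12(t_it_j+t_jt_i)-\frac13\mathrm{tr}(t_it_j)I$, $f_{iij}=[t_i^2,t_j]$, $f_{132}=[t_1t_3+t_3t_1,t_2]$, $f_{123}=[t_1t_2+t_2t_1,t_3]$: (i) $\mathrm{tr}(t_1t_2t_3)\,t_1=\frac12\big(\mathrm{tr}(t_1^2)[t_2,t_3]-\mathrm{tr}(t_1t_2)[t_1,t_3]+\mathrm{tr}(t_1t_3)[t_1,t_2]\big)$; (ii) $\mathrm{tr}(t_1t_2t_3)[t_1,t_2]=\frac14\big(\mathrm{tr}(t_1t_3)\mathrm{tr}(t_2^2)-\mathrm{tr}(t_1t_2)\mathrm{tr}(t_2t_3)\big)t_1+\frac14\big(\mathrm{tr}(t_1^2)\mathrm{tr}(t_2t_3)-\mathrm{tr}(t_1t_2)\mathrm{tr}(t_1t_3)\big)t_2+\frac14\big(\mathrm{tr}(t_1t_2)^2-\mathrm{tr}(t_1^2)\mathrm{tr}(t_2^2)\big)t_3$; (iii) $\mathrm{tr}(t_1t_2t_3)f_{11}=\frac14\mathrm{tr}(t_1t_3)f_{112}-\frac14\mathrm{tr}(t_1t_2)f_{113}-\frac1{12}\mathrm{tr}(t_1^2)f_{132}+\frac1{12}\mathrm{tr}(t_1^2)f_{123}$; (iv) $\mathrm{tr}(t_1t_2t_3)f_{112}=\frac12\big(\mathrm{tr}(t_1t_3)\mathrm{tr}(t_2^2)-\mathrm{tr}(t_1t_2)\mathrm{tr}(t_2t_3)\big)f_{11}+\f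rac12\big(\mathrm{tr}(t_1^2)\mathrm{tr}(t_2t_3)-\mathrm{tr}(t_1t_2)\mathrm{tr}(t_1t_3)\big)f_{12}+\frac12\big(\mathrm{tr}(t_1t_2)^2-\mathrm{tr}(t_1^2)\mathrm{tr}(t_2^2)\big)f_{13}$.
   Context: $K$ is a field of characteristic $0$. $T_3=\{t^{(k)}_{ij}\mid1\le i<j\le3,\ k=1,2,3\}$ are commuting indeterminates and $t_k\in M_3(K[T_3])$ is the generic skew-symmetric matrix with zero diagonal, $(i,j)$ entry $t^{(k)}_{ij}$ and $(j,i)$ entry $-t^{(k)}_{ij}$ for $i<j$. $I$ is the $3\times3$ identity matrix and $[a,b]=ab-ba$; scalars $\mathrm{tr}(\cdot)\in K[T_3]$ multiply matrices entrywise. *)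

From HB Require Import structures.
From mathcomp Require Import all_boot all_order all_algebra.
From mathcomp Require Import mpoly.
Set Implicit Arguments. Unset Strict Implicit. Unset Printing Implicit Defensive.
Import Order.TTheory GRing.Theory.
Local Open Scope ring_scope.

(* K[T_3]: polynomial ring in the 9 indeterminates t^(k)_{ij}, 1<=i<j<=3, k=1,2,3.
   Indeterminate t^(k)_{ij} (0-based k, i<j) is 'X_(tvar k i j) with index
   3*k + (i+j-1), i.e. (0,1)|->0, (0,2)|->1, (1,2)|->2 inside block k. *)
Definition KT3 (K : fieldType) := {mpoly K[9]}.

Definition tvar (k i j : 'I_3) : 'I_9 := inord (3 * k + (i + j).-1).

(* generic skew-symmetric 3x3 matrix t_k (k = 0,1,2 stands for t_1,t_2,t_3) *)
Definition tgen (K : fieldType) (k : 'I_3) : 'M[KT3 K]_3 :=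
  \matrix_(i < 3, j < 3)
    (if (i < j)%N then 'X_(tvar k i j)
     else if (j < i)%N then - 'X_(tvar k j i) else 0).

Definition comm3 (K : fieldType) (a b : 'M[KT3 K]_3) : 'M[KT3 K]_3 := a * b - b * a.

Definition kc (K : fieldType) (c : K) : KT3 K := c%:MP.

From HB Require Import structures.
From mathcomp Require Import all_boot all_order all_algebra.
From mathcomp Require Import mpoly.
From mathcomp Require Import ring.
Import GRing.Theory.
Local Open Scope ring_scope.

(* Each entry of each identity is a polynomial in the nine independent entries
   of t1, t2, t3 and in the constants 1/2, 1/3, 1/4, 1/12.  Writing all of these
   constants as multiples of w = 1/12 and multiplying the side of lower degree in
   w by a power of 12 w = 1 turns every entry into a polynomial identity with
   integer coefficients.  Hence the identities hold for skew-symmetric matrices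
   over any commutative ring containing 1/2 and 1/3, in particular over K[T_3]. *)

Section MatrixCoordinates.
Variable R : comRingType.

Definition mx3 (x11 x12 x13 x21 x22 x23 x31 x32 x33 : R) : 'M[R]_3 :=
  \matrix_(i, j) nth 0 (nth [::] [:: [:: x11; x12; x13];
                                     [:: x21; x22; x23];
                                     [:: x31; x32; x33]] i) j.

Local Ltac mx3_entries := apply/matrixP;
  case=> [[|[|[|//]]] ?]; case=> [[|[|[|//]]] ?];
  rewrite ?(mxE, big_ord_recr, big_ord0) /=.

Lemma mx3_mul a11 a12 a13 a21 a22 a23 a31 a32 a33
              b11 b12 b13 b21 b22 b23 b31 b32 b33 :
  mx3 a11 a12 a13 a21 a22 a23 a31 a32 a33 * mx3 b11 b12 b13 b21 b22 b23 b31 b32 b33 =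
  mx3 (a11 * b11 + a12 * b21 + a13 * b31) (a11 * b12 + a12 * b22 + a13 * b32)
      (a11 * b13 + a12 * b23 + a13 * b33)
      (a21 * b11 + a22 * b21 + a23 * b31) (a21 * b12 + a22 * b22 + a23 * b32)
      (a21 * b13 + a22 * b23 + a23 * b33)
      (a31 * b11 + a32 * b21 + a33 * b31) (a31 * b12 + a32 * b22 + a33 * b32)
      (a31 * b13 + a32 * b23 + a33 * b33).
Proof. by mx3_entries; ring. Qed.

Lemma mx3_add a11 a12 a13 a21 a22 a23 a31 a32 a33
              b11 b12 b13 b21 b22 b23 b31 b32 b33 :
  mx3 a11 a12 a13 a21 a22 a23 a31 a32 a33 + mx3 b11 b12 b13 b21 b22 b23 b31 b32 b33 =
  mx3 (a11 + b11) (a12 + b12) (a13 + b13) (a21 + b21) (a22 + b22) (a23 + b23)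
      (a31 + b31) (a32 + b32) (a33 + b33).
Proof. by mx3_entries. Qed.

Lemma mx3_opp a11 a12 a13 a21 a22 a23 a31 a32 a33 :
  - mx3 a11 a12 a13 a21 a22 a23 a31 a32 a33 =
  mx3 (- a11) (- a12) (- a13) (- a21) (- a22) (- a23) (- a31) (- a32) (- a33).
Proof. by mx3_entries. Qed.

Lemma mx3_scale c a11 a12 a13 a21 a22 a23 a31 a32 a33 :
  c *: mx3 a11 a12 a13 a21 a22 a23 a31 a32 a33 =
  mx3 (c * a11) (c * a12) (c * a13) (c * a21) (c * a22) (c * a23)
      (c * a31) (c * a32) (c * a33).
Proof. by mx3_entries. Qed.

Lemma mx3_trace a11 a12 a13 a21 a22 a23 a31 a32 a33 :
  \tr (mx3 a11 a12 a13 a21 a22 a23 a31 a32 a33) = a11 + a22 + a33.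
Proof. by rewrite /mxtrace ?(mxE, big_ord_recr, big_ord0) /= add0r. Qed.

Lemma mx3_1 : 1 = mx3 1 0 0 0 1 0 0 0 1.
Proof. by mx3_entries. Qed.

End MatrixCoordinates.
Arguments mx3 {R}.

Lemma natr_inv_mul (R : ringType) (m n : nat) (x y : R) :
  x *+ m = 1 -> y *+ (m * n) = 1 -> x = y *+ n.
Proof.
move=> xm ymn.
by rewrite -[x]mulr1 -ymn mulnC mulrnA mulrnAr -mulrnAl xm mul1r.
Qed.

Section SkewIdentities.
Variables (R : comRingType) (h q tw th : R).
Hypotheses (h2 : h *+ 2 = 1) (q4 : q *+ 4 = 1) (tw12 : tw *+ 12 = 1) (th3 : th *+ 3 = 1).

Lemma skew_mx3 {A : 'M[R]_3} :
  A^T = - A -> A = mx3 0 (A 0 1) (A 0 2) (- A 0 1) 0 (A 1 2) (- A 0 2) (- A 1 2) 0.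
Proof.
move=> /matrixP skewA.
have Aji i j : A j i = - A i j by have := skewA i j; rewrite !mxE.
have Aii i : A i i = 0.
  by rewrite -[A i i]mul1r -h2 mulrnAl -mulrnAr mulr2n {2}Aji addrN mulr0.
have ord3 (i : 'I_3) : [\/ i = 0, i = 1 | i = 2].
  by case: i => [[|[|[|//]]] ?]; [constructor 1|constructor 2|constructor 3];
    exact: val_inj.
apply/matrixP=> i j; rewrite mxE.
by case: (ord3 i) (ord3 j) => -> [] -> /=; rewrite ?Aii // Aji.
Qed.

Lemma half_twelfths : h = tw *+ 6. Proof. exact: (@natr_inv_mul _ 2 6). Qed.
Lemma quarter_twelfths : q = tw *+ 3. Proof. exact: (@natr_inv_mul _ 4 3). Qed.
Lemma third_twelfths : th = tw *+ 4. Proof. exact: (@natr_inv_mul _ 3 4). Qed.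

Variables t1 t2 t3 : 'M[R]_3.
Hypotheses (t1sk : t1^T = - t1) (t2sk : t2^T = - t2) (t3sk : t3^T = - t3).

Local Notation "[ a , b ]" := (a * b - b * a).
Local Notation T := (\tr (t1 * t2 * t3)).

Definition traceless_sym (a b : 'M[R]_3) :=
  h *: (a * b + b * a) - (th * \tr (a * b)) *: 1.

(* n is how much the degree in tw of the right-hand side exceeds that of the
   left-hand side, once h, q, th are rewritten as multiples of tw. *)
Local Ltac skew_ring n :=
  rewrite -[LHS]scale1r -(@expr1n R n) -{1}tw12 ?/traceless_sym;
  rewrite ?half_twelfths ?quarter_twelfths ?third_twelfths;
  rewrite (skew_mx3 t1sk) (skew_mx3 t2sk) (skew_mx3 t3sk);
  rewrite !(expr2, mx3_1, mx3_mul, mx3_add, mx3_opp, mx3_scale, mx3_trace);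
  congr mx3; ring.

Lemma trace_triple_scale_t1 :
  T *: t1 = h *: (\tr (t1 ^+ 2) *: [t2, t3] - \tr (t1 * t2) *: [t1, t3]
                  + \tr (t1 * t3) *: [t1, t2]).
Proof. by skew_ring 1%N. Qed.

Lemma trace_triple_scale_comm :
  T *: [t1, t2] =
    (q * (\tr (t1 * t3) * \tr (t2 ^+ 2) - \tr (t1 * t2) * \tr (t2 * t3))) *: t1
  + (q * (\tr (t1 ^+ 2) * \tr (t2 * t3) - \tr (t1 * t2) * \tr (t1 * t3))) *: t2
  + (q * (\tr (t1 * t2) ^+ 2 - \tr (t1 ^+ 2) * \tr (t2 ^+ 2))) *: t3.
Proof. by skew_ring 1%N. Qed.

Lemma trace_triple_scale_traceless_sq :
  T *: traceless_sym t1 t1 =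
    (q * \tr (t1 * t3)) *: [t1 ^+ 2, t2] - (q * \tr (t1 * t2)) *: [t1 ^+ 2, t3]
  - (tw * \tr (t1 ^+ 2)) *: [t1 * t3 + t3 * t1, t2]
  + (tw * \tr (t1 ^+ 2)) *: [t1 * t2 + t2 * t1, t3].
Proof. by skew_ring 0%N. Qed.

Lemma trace_triple_scale_comm_sq :
  T *: [t1 ^+ 2, t2] =
    (h * (\tr (t1 * t3) * \tr (t2 ^+ 2) - \tr (t1 * t2) * \tr (t2 * t3)))
      *: traceless_sym t1 t1
  + (h * (\tr (t1 ^+ 2) * \tr (t2 * t3) - \tr (t1 * t2) * \tr (t1 * t3)))
      *: traceless_sym t1 t2
  + (h * (\tr (t1 * t2) ^+ 2 - \tr (t1 ^+ 2) * \tr (t2 ^+ 2)))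
      *: traceless_sym t1 t3.
Proof. by skew_ring 2%N. Qed.

End SkewIdentities.

Lemma kc_natrV (K : fieldType) (n : nat) :
  [pchar K] =i pred0 -> (0 < n)%N -> kc (n%:R^-1 : K) *+ n = 1.
Proof.
move=> /pcharf0P charK n_gt0.
by rewrite /kc -rmorphMn /= -mulr_natr mulVf ?rmorph1 // charK -lt0n.
Qed.

Lemma tgen_skew (K : fieldType) (k : 'I_3) : (tgen K k)^T = - tgen K k.
Proof.
apply/matrixP=> i j; rewrite !mxE.
by case: ltngtP => // _; rewrite ?opprK ?oppr0.
Qed.

Theorem proposition5p7 (K : fieldType) (hK : [pchar K] =i pred0) :
  let t1 := tgen K 0 in
  let t2 := tgen K 1 in
  let t3 := tgen K 2 in
  let tr := fun (a : 'M[KT3 K]_3) => \tr a in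
  let h := kc (2%:R^-1 : K) in
  let q := kc (4%:R^-1 : K) in
  let tw := kc (12%:R^-1 : K) in
  let th := kc (3%:R^-1 : K) in
  let f := fun a b : 'M[KT3 K]_3 => h *: (a * b + b * a) - (th * tr (a * b)) *: 1 in
  let f11 := f t1 t1 in
  let f12 := f t1 t2 in
  let f13 := f t1 t3 in
  let f112 := comm3 (t1 ^+ 2) t2 in
  let f113 := comm3 (t1 ^+ 2) t3 in
  let f132 := comm3 (t1 * t3 + t3 * t1) t2 in
  let f123 := comm3 (t1 * t2 + t2 * t1) t3 in
  let T := tr (t1 * t2 * t3) in
  [/\ T *: t1 = h *: (tr (t1 ^+ 2) *: comm3 t2 t3 - tr (t1 * t2) *: comm3 t1 t3
                      + tr (t1 * t3) *: comm3 t1 t2),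
      T *: comm3 t1 t2 =
        (q * (tr (t1 * t3) * tr (t2 ^+ 2) - tr (t1 * t2) * tr (t2 * t3))) *: t1
      + (q * (tr (t1 ^+ 2) * tr (t2 * t3) - tr (t1 * t2) * tr (t1 * t3))) *: t2
      + (q * (tr (t1 * t2) ^+ 2 - tr (t1 ^+ 2) * tr (t2 ^+ 2))) *: t3,
      T *: f11 = (q * tr (t1 * t3)) *: f112 - (q * tr (t1 * t2)) *: f113
                 - (tw * tr (t1 ^+ 2)) *: f132 + (tw * tr (t1 ^+ 2)) *: f123
    & T *: f112 =
        (h * (tr (t1 * t3) * tr (t2 ^+ 2) - tr (t1 * t2) * tr (t2 * t3))) *: f11
      + (h * (tr (t1 ^+ 2) * tr (t2 * t3) - tr (t1 * t2) * tr (t1 * t3))) *: f12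
      + (h * (tr (t1 * t2) ^+ 2 - tr (t1 ^+ 2) * tr (t2 ^+ 2))) *: f13].
Proof.
split; [apply: trace_triple_scale_t1 | apply: trace_triple_scale_comm
       | apply: trace_triple_scale_traceless_sq | apply: trace_triple_scale_comm_sq].
all: by [apply: kc_natrV | apply: tgen_skew].
Qed.
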